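(* Let $q$ be odd with $q\equiv1\pmod4$ fixed. Then, as $g\to\infty$, $$\sum_{\substack{P\text{ monic irreducible}\\ \deg P=2g+1}}\ \sum_{n=0}^{g}\ \sum_{\substack{f\text{ monic},\ \deg f=n\\ f=\square}}\chi_P(f)\,q^{-n/2}=\frac{|P|}{\log_q|P|}\left(\left[\frac g2\right]+1\right)+O\!\left(\frac{\sqrt{|P|}}{\log_q|P|}\,g\right),$$ where $|P|=q^{2g+1}$, $\log_q|P|=2g+1$, and $[x]$ is the integer part of $x$.
   Context: $A=\mathbb{F}_q[T]$; for nonzero $f\in A$, $|f|=q^{\deg f}$. ''$f=\square$'' means $f$ is the square of a monic polynomial. For a monic irreducible $Q$ and $a\in A$, $\left(\frac{a}{Q}\right)$ is $0$ if $Q\mid a$, $1$ if $a$ is a nonzero square mod $Q$, $-1$ otherwise; extended to monic $f=\prod Q_i^{e_i}$ by $\left(\frac{a}{f}\right)=\prod\left(\frac{a}{Q_i}\right)^{e_i}$, $\left(\frac{a}{1}\right)=1$. For monic irreducible $P$, $\chi_P(f)=\left(\frac{P}{f}\right)$. Implied constants may depend on $q$. *)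

From HB Require Import structures.
From Stdlib Require Import ClassicalEpsilon.
From mathcomp Require Import all_boot all_order all_algebra.
Set Implicit Arguments. Unset Strict Implicit. Unset Printing Implicit Defensive.
Import Order.TTheory GRing.Theory Num.Theory.
Local Open Scope ring_scope.

Definition pdec (P : Prop) : bool :=
  if excluded_middle_informative P then true else false.

Section FqT.
Variable F : finFieldType.

(* The monic polynomial T^n + t_{n-1} T^{n-1} + ... + t_0 ;
   every monic polynomial of degree n arises from exactly one t. *)
Definition mkmonic (n : nat) (t : {ffun 'I_n -> F}) : {poly F} :=
  'X^n + \sum_(i < n) t i *: 'X^i.

Definition monic_irr (p : {poly F}) : bool :=
  (p \is monic) && pdec (irreducible_poly p).

Definition is_msquare (f : {poly F}) : bool :=
  pdec (exists h : {poly F}, h \is monic /\ f = h ^+ 2).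

Definition legendre (a Q : {poly F}) : int :=
  if Q %| a then 0
  else if pdec (exists b : {poly F}, Q %| a - b ^+ 2) then 1 else -1.

Definition pmult (Q f : {poly F}) : nat :=
  \max_(e < size f | Q ^+ e %| f) e.

(* (a / f) = prod over the monic irreducible Q | f of (a/Q)^(v_Q(f)),
   Q ranging over all monic irreducibles of degree <= deg f. *)
Definition jacobi (a f : {poly F}) : int :=
  \prod_(d < size f)
    \prod_(t : {ffun 'I_d -> F} | monic_irr (mkmonic t))
      legendre a (mkmonic t) ^+ pmult (mkmonic t) f.

Definition chiP (P f : {poly F}) : int := jacobi P f.

End FqT.

From HB Require Import structures.
From Stdlib Require Import ClassicalEpsilon.
From mathcomp Require Import all_boot all_order all_algebra all_field.
From mathcomp Require Import zify ring lra.
Import Order.TTheory GRing.Theory Num.Theory.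
Local Open Scope ring_scope.
Set Implicit Arguments. Unset Strict Implicit. Unset Printing Implicit Defensive.

(* We show S(g) = pi(2g+1) ([g/2] + 1) exactly, pi(N) being the number of
   monic irreducibles of degree N.

   If f = h^2 with deg f <= g < deg P, no irreducible factor Q of f divides P,
   so (P/Q) = +-1, and Q occurs in f with even multiplicity 2 v_Q(h); hence
   chi_P(f) = 1.  As there are q^(n/2) monic squares of even degree n and none
   of odd degree, the inner double sum equals [g/2] + 1 for every P.  The
   proposition
   then follows from the elementary prime polynomial theorem
   q^N - 2 q^g <= N pi(N) <= q^N  for N = 2g+1.  Both bounds come from
   X^(q^N) - X, which is squarefree (its derivative is -1) and is divisible by
   a monic irreducible P exactly when deg P divides N; the latter is proved in
   the finite field F[X]/(P), where raising to the power q^N is a ring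
   morphism fixing F. *)

Lemma pdecP (P : Prop) : reflect P (pdec P).
Proof. by rewrite /pdec; case: excluded_middle_informative => h; constructor. Qed.

Section MonicCoordinates.
Variable F : finFieldType.

Lemma size_mkmonic_tail n (t : {ffun 'I_n -> F}) :
  (size (\sum_(i < n) t i *: 'X^i : {poly F})%R <= n)%N.
Proof.
apply: (leq_trans (size_sum _ _ _)); apply/bigmax_leqP => i _.
by apply: (leq_trans (size_scale_leq _ _)); rewrite size_polyXn.
Qed.

Lemma size_mkmonic n (t : {ffun 'I_n -> F}) : size (mkmonic t) = n.+1.
Proof. by rewrite size_polyDl ?size_polyXn // ltnS size_mkmonic_tail. Qed.

Lemma monic_mkmonic n (t : {ffun 'I_n -> F}) : mkmonic t \is monic.
Proof.
rewrite /mkmonic monicE lead_coefDl ?lead_coefXn // size_polyXn ltnS.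
exact: size_mkmonic_tail.
Qed.

Lemma coef_mkmonic n (t : {ffun 'I_n -> F}) (i : 'I_n) : (mkmonic t)`_i = t i.
Proof.
rewrite coefD coefXn (ltn_eqF (ltn_ord i)) add0r coef_sum (bigD1 i) //=.
rewrite coefZ coefXn eqxx mulr1 big1 ?addr0 // => j ji.
rewrite coefZ coefXn; case: eqP => [/val_inj eq_ij | _]; last by rewrite mulr0.
by rewrite eq_ij eqxx in ji.
Qed.

Lemma mkmonic_inj n : injective (@mkmonic F n).
Proof.
move=> t1 t2 e; apply/ffunP => i.
by rewrite -!coef_mkmonic e.
Qed.

Lemma mkmonicK n (p : {poly F}) : p \is monic -> size p = n.+1 ->
  mkmonic [ffun i : 'I_n => p`_i] = p.
Proof.
move=> mp sp; apply/polyP => i.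
have [lt_in | le_ni] := ltnP i n; first by rewrite (coef_mkmonic _ (Ordinal lt_in)) ffunE.
have /monicP := monic_mkmonic [ffun i : 'I_n => p`_i].
move: mp => /monicP; rewrite /lead_coef size_mkmonic sp /=.
case: (eqVneq i n) => [-> -> -> // | ne_in _ _].
by rewrite !nth_default // ?sp ?size_mkmonic ltn_neqAle eq_sym ne_in.
Qed.

End MonicCoordinates.

(* Raising to the power q^N is additive in characteristic p and fixes F; hence
   it commutes with evaluation of polynomials over F. *)
Section Frobenius.
Variable F : finFieldType.
Local Notation q := #|F|.

Lemma card_pchar_power : exists2 p, p \in [pchar F] & q = (p ^ logn p q)%N.
Proof. by have [p _ pF] := finPcharP F; exists p => //; apply: card_pprimeChar. Qed.

Lemma expf_cardX N (a : F) : a ^+ (q ^ N) = a.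
Proof. by elim: N => [|N IH]; rewrite ?expr1 // expnSr exprM IH expf_card. Qed.

(* The characteristic divides q, so q = 0 in F. *)
Lemma natr_card : (q%:R : F) = 0.
Proof.
have [p pF qE] := card_pchar_power; rewrite qE natrX (pcharf0 pF) expr0n.
by case: eqP => // l0; have := finNzRing_gt1 F; rewrite qE l0.
Qed.

Lemma frobeniusX_add (K : comAlgType F) N (x y : K) :
  (x + y) ^+ (q ^ N) = x ^+ (q ^ N) + y ^+ (q ^ N).
Proof.
have [p pF ->] := card_pchar_power; have pK : p \in [pchar K] by rewrite pchar_lalg.
rewrite -expnM; elim: (_ * N)%N => [|n IH]; first by rewrite !expr1.
by rewrite expnSr !exprM IH -!(pFrobenius_autE pK) pFrobenius_autD_comm //; apply: mulrC.
Qed.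

Lemma horner_frobeniusX (K : comAlgType F) (f : {rmorphism F -> K}) N
    (p : {poly F}) (x : K) :
  (map_poly f p).[x] ^+ (q ^ N) = (map_poly f p).[x ^+ (q ^ N)].
Proof.
elim/poly_ind: p => [|p c IH].
  by rewrite rmorph0 !horner0 expr0n expn_eq0 (gtn_eqF (ltnW (finNzRing_gt1 F))).
rewrite rmorphD rmorphM /= map_polyX map_polyC /= !hornerMXaddC.
by rewrite frobeniusX_add exprMn IH -rmorphXn expf_cardX.
Qed.

End Frobenius.

Lemma size_XnsubX (R : nzRingType) m : (1 < m)%N -> size ('X^m - 'X : {poly R}) = m.+1.
Proof. by move=> m_gt1; rewrite size_polyDl size_polyXn // size_polyN size_polyX. Qed.

(* In the finite field K = F[X]/(P), P monic irreducible of degree d with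
   |K| = q^d, the class xK of X generates K over F.  Hence P | X^(q^N) - X,
   i.e. xK^(q^N) = xK, holds iff every element of K is fixed by y |-> y^(q^N),
   which happens iff d | N. *)
Section ResidueField.
Variable F : finFieldType.
Variable P : {poly F}.
Hypothesis P_irr : monic_irreducible_poly P.
Local Notation q := #|F|.
Local Notation d := (size P).-1.
Local Notation K := {poly %/ P with P_irr}.

Let xK : K := in_qpoly P 'X.

Lemma size_irr_gt1 : (1 < size P)%N.
Proof. by case: P_irr => [[]]. Qed.

Lemma deg_irr_gt0 : (0 < d)%N.
Proof. by rewrite -ltnS prednK ?size_irr_gt1 // ltnW // size_irr_gt1. Qed.

Lemma in_qpoly_horner (p : {poly F}) : in_qpoly P p = (map_poly (qpolyC P) p).[xK].
Proof. by rewrite -in_qpoly_comp_horner comp_polyXr. Qed.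

Lemma in_qpoly_val (y : K) : in_qpoly P (y : {poly F}) = y.
Proof. exact/val_inj/(in_qpoly_small (size_mk_monic y)). Qed.

Lemma in_qpoly_eq0 (p : {poly F}) : (in_qpoly P p == 0 :> K) = (P %| p).
Proof.
rewrite dvdpE -val_eqE /= (mk_monicE P_irr).
by apply/eqP/idP => /Pdiv.Ring.rmodp_eq0P.
Qed.

(* Every element of K satisfies y^(q^d) = y; in particular P | X^(q^d) - X. *)
Lemma irr_dvd_XqdsubX : P %| 'X^(q ^ d) - 'X.
Proof.
rewrite -in_qpoly_eq0 rmorphB rmorphXn /= -/xK -(card_qfpoly P_irr).
by rewrite subr_eq0; apply/eqP/expf_card.
Qed.

Lemma frobenius_fixes_all N : xK ^+ (q ^ N) = xK -> forall y : K, y ^+ (q ^ N) = y.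
Proof.
move=> fix_xK y.
by rewrite -(in_qpoly_val y) in_qpoly_horner horner_frobeniusX fix_xK.
Qed.

(* If y^(q^N) = y on K, then also y^(q^(N mod d)) = y; were N mod d > 0, the
   nonzero polynomial X^(q^(N mod d)) - X would have all q^d elements of K as
   roots despite its degree q^(N mod d) < q^d. *)
Lemma deg_dvd_of_fixes_all N : (forall y : K, y ^+ (q ^ N) = y) -> (d %| N)%N.
Proof.
move=> fixN; have fixd (y : K) : y ^+ (q ^ d) = y by rewrite -(card_qfpoly P_irr); apply: expf_card.
have fix_mul e m : (forall y : K, y ^+ (q ^ e) = y) -> forall y : K, y ^+ (q ^ (e * m)) = y.
  move=> fixe; elim: m => [|m IH] y; first by rewrite muln0 expr1.
  by rewrite mulnS expnD exprM fixe IH.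
have fix_mod (y : K) : y ^+ (q ^ (N %% d)) = y.
  by rewrite -{2}(fixN y) {2}(divn_eq N d) expnD exprM mulnC fix_mul.
apply/negPn/negP => rem_gt0; rewrite -lt0n in rem_gt0.
have q_gt1 := finNzRing_gt1 F.
have qr_gt1 : (1 < q ^ (N %% d))%N by rewrite -(expn0 q) ltn_exp2l.
have nz : ('X^(q ^ (N %% d)) - 'X : {poly K}) != 0 by rewrite -size_poly_gt0 size_XnsubX.
have all_roots : all (root ('X^(q ^ (N %% d)) - 'X)) (enum K).
  by apply/allP => y _; rewrite rootE !hornerE fix_mod subrr.
have := max_poly_roots nz all_roots (enum_uniq K).
by rewrite size_XnsubX // -cardE card_qfpoly ltnS leqNgt ltn_exp2l // ltn_mod deg_irr_gt0.
Qed.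

Lemma irr_dvd_XqNsubX N : P %| 'X^(q ^ N) - 'X -> (d %| N)%N.
Proof.
rewrite -in_qpoly_eq0 rmorphB rmorphXn /= -/xK subr_eq0 => /eqP fix_xK.
exact/deg_dvd_of_fixes_all/frobenius_fixes_all.
Qed.

End ResidueField.

Section Irreducibles.
Variable F : finFieldType.
Implicit Types p r Q : {poly F}.

Lemma monic_irrP p : reflect (p \is monic /\ irreducible_poly p) (monic_irr p).
Proof.
by apply: (iffP andP) => -[mp ip]; split=> //; apply/pdecP.
Qed.

Lemma irreducible_eqp p r : p %= r -> irreducible_poly p -> irreducible_poly r.
Proof.
move=> pr [sp irr_p]; split; first by rewrite -(eqp_size pr).
move=> Q sQ Qr; have Qp : Q %| p by rewrite (eqp_dvdr _ pr).
exact: eqp_trans (irr_p Q sQ Qp) pr.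
Qed.

Lemma irreducible_factor Q : (1 < size Q)%N ->
  exists p, [/\ p \is monic, irreducible_poly p & p %| Q].
Proof.
move: {2}(size Q) (leqnn (size Q)) => n; elim: n Q => [|n IH] Q sQn sQ.
  by move: (leq_trans sQ sQn).
have [/irreducibleP irrQ | ] := boolP (irreducibleb Q).
  have lcQ : lead_coef Q != 0 by rewrite lead_coef_eq0 -size_poly_gt0 ltnW.
  exists ((lead_coef Q)^-1 *: Q); split.
  - by rewrite monicE lead_coefZ mulVf.
  - by apply: irreducible_eqp irrQ; rewrite eqp_sym eqp_scale // invr_eq0.
  - by rewrite dvdpZl // invr_eq0.
rewrite /irreducibleb sQ negb_forall => /existsP [r].
rewrite negb_imply -ltnNge -Pdiv.Idomain.dvdpE => /andP [rQ sr].
have srQ : (size r < size Q)%N.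
  by apply: leq_ltn_trans (size_npoly r) _; rewrite prednK // ltnW.
have [p [mp ip pr]] := IH r (leq_trans srQ sQn) sr.
by exists p; split=> //; apply: dvdp_trans pr rQ.
Qed.

Lemma coprime_monic_irr p r : p \is monic -> irreducible_poly p ->
  r \is monic -> irreducible_poly r -> p != r -> coprimep p r.
Proof.
move=> mp ip mr [_ irr_r] pr; have [sp _] := ip.
rewrite irreducible_poly_coprime //.
apply: contra pr => pr_dvd; have sp1 : size p != 1%N by rewrite neq_ltn sp orbT.
by have := irr_r p sp1 pr_dvd; rewrite eqp_monic.
Qed.

Lemma prod_irr_dvd Q (s : seq {poly F}) : uniq s ->
  (forall p, p \in s -> [/\ p \is monic, irreducible_poly p & p %| Q]) ->
  \prod_(p <- s) p %| Q.
Proof.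
elim: s => [|p s IH] /=; first by rewrite big_nil dvd1p.
case/andP => ps us irr_s; have [mp ip pQ] := irr_s p (mem_head _ _).
have irr_s' r : r \in s -> [/\ r \is monic, irreducible_poly r & r %| Q].
  by move=> rs; apply: irr_s; rewrite inE rs orbT.
rewrite big_cons Gauss_dvdp ?pQ ?IH // big_seq.
apply: (big_ind (coprimep p)) => [|x y|r rs]; first exact: coprimep1.
  by rewrite coprimepMr => -> ->.
have [mr ir _] := irr_s' r rs.
by apply: coprime_monic_irr => //; apply: contraNneq ps => ->.
Qed.

Lemma size_prod_monic (s : seq {poly F}) : all (fun p => p \is monic) s ->
  size (\prod_(p <- s) p) = (\sum_(p <- s) (size p).-1).+1.
Proof.
elim: s => [|p s IH] /=; first by rewrite !big_nil size_poly1.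
case/andP=> mp ms; rewrite !big_cons size_monicM ?IH //; last first.
  by apply/monic_neq0; rewrite big_seq monic_prod // => r /(allP ms).
by have := monic_neq0 mp; rewrite -size_poly_gt0; case: (size p) => // k _; rewrite addnS.
Qed.

Definition nb_irr d := #|[pred t : {ffun 'I_d -> F} | monic_irr (mkmonic t)]|.

Definition irr_seq d : seq {poly F} :=
  [seq mkmonic t | t <- enum [pred t : {ffun 'I_d -> F} | monic_irr (mkmonic t)]].

Lemma uniq_irr_seq d : uniq (irr_seq d).
Proof. by rewrite map_inj_uniq ?enum_uniq //; apply: mkmonic_inj. Qed.

Lemma mem_irr_seq d p : (p \in irr_seq d) = monic_irr p && (size p == d.+1).
Proof.
apply/mapP/andP => [[t] | [mi /eqP sp]].
  by rewrite mem_enum inE => mi ->; rewrite size_mkmonic.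
have mp : p \is monic by case/monic_irrP: mi.
by exists [ffun i : 'I_d => p`_i]; rewrite ?mem_enum ?inE mkmonicK.
Qed.

Lemma deg_sum_irr_seq d : (\sum_(p <- irr_seq d) (size p).-1 = d * nb_irr d)%N.
Proof.
rewrite big_map big_enum /=.
by under eq_bigr => t _ do rewrite size_mkmonic /=; rewrite sum_nat_const mulnC.
Qed.

(* Upper half of the prime polynomial theorem: the monic irreducibles of
   degree d all divide X^(q^d) - X. *)
Lemma nb_irr_upper d : (d * nb_irr d <= #|F| ^ d)%N.
Proof.
case: d => [|d]; first by rewrite mul0n.
have qd_gt1 : (1 < #|F| ^ d.+1)%N by rewrite -(expn0 #|F|) ltn_exp2l ?finNzRing_gt1.
have nz : ('X^(#|F| ^ d.+1) - 'X : {poly F}) != 0 by rewrite -size_poly_gt0 size_XnsubX.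
have irr_dvd p : p \in irr_seq d.+1 ->
    [/\ p \is monic, irreducible_poly p & p %| 'X^(#|F| ^ d.+1) - 'X].
  rewrite mem_irr_seq => /andP [/monic_irrP [mp ip] /eqP sp].
  by split=> //; have := irr_dvd_XqdsubX (conj ip mp); rewrite sp.
have monic_s : all (fun p => p \is monic) (irr_seq d.+1).
  by apply/allP => p /irr_dvd [].
have := dvdp_leq nz (prod_irr_dvd (uniq_irr_seq _) irr_dvd).
by rewrite size_prod_monic // size_XnsubX // deg_sum_irr_seq.
Qed.

End Irreducibles.

Section LowerBound.
Variable F : finFieldType.
Local Notation q := #|F|.
Implicit Types p Q : {poly F}.

Lemma squarefree_deg_bound Q (s : seq {poly F}) : Q != 0 ->
  (forall p, p \is monic -> irreducible_poly p -> ~~ (p * p %| Q)) ->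
  (forall p, p \is monic -> irreducible_poly p -> p %| Q -> p \in s) ->
  ((size Q).-1 <= \sum_(p <- s) (size p).-1)%N.
Proof.
move: {2}(size Q) (leqnn (size Q)) => n; elim: n Q s => [|n IH] Q s sQn Q0 sqf fac_s.
  by move: sQn; rewrite leqn0 => /eqP ->.
have [sQ | sQ] := leqP (size Q) 1; first by case: (size Q) sQ => [|[]].
have [p [mp ip /dvdpP [Q' eQ]]] := irreducible_factor sQ.
have Q'0 : Q' != 0 by apply: contraNneq Q0 => Q'0; rewrite eQ Q'0 mul0r.
have npQ' : ~~ (p %| Q') by apply: contra (sqf p mp ip) => pQ'; rewrite eQ dvdp_mul ?dvdpp.
have ps : p \in s by apply: fac_s; rewrite // eQ dvdp_mull.
have sQE : size Q = (size Q' + size p).-1 by rewrite eQ size_Mmonic.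
have fac_rem r : r \is monic -> irreducible_poly r -> r %| Q' -> r \in rem p s.
  move=> mr ir rQ'; have : r \in s by apply: fac_s; rewrite // eQ dvdp_mulr.
  rewrite (perm_mem (perm_to_rem ps)) inE => /orP [/eqP rp | //].
  by rewrite -rp rQ' in npQ'.
have sqf' r : r \is monic -> irreducible_poly r -> ~~ (r * r %| Q').
  by move=> mr ir; apply: contra (sqf r mr ir) => rrQ'; rewrite eQ dvdp_mulr.
have sp : (1 < size p)%N by case: ip.
have sQ'n : (size Q' <= n)%N by move: sQn; rewrite sQE; lia.
have IHQ' := IH Q' (rem p s) sQ'n Q'0 sqf' fac_rem.
rewrite (perm_big _ (perm_to_rem ps)) big_cons sQE.
apply: leq_trans (leq_add (leqnn _) IHQ').
have Q'_gt0 : (0 < size Q')%N by rewrite size_poly_gt0.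
by move: Q'_gt0 sp; move: (size Q') (size p) => a b; lia.
Qed.

(* X^(q^N) - X is squarefree: its derivative is -1. *)
Lemma XqNsubX_squarefree N : (0 < N)%N ->
  forall p, p \is monic -> irreducible_poly p -> ~~ (p * p %| 'X^(q ^ N) - 'X).
Proof.
move=> N_gt0 p mp [sp _]; apply/negP => /dvdpP [r eX].
have : p %| ('X^(q ^ N) - 'X)^`().
  rewrite eX !derivM mulrDr mulrA.
  by apply: dvdp_add; [|apply: dvdp_add]; apply: dvdp_mull; rewrite ?dvdp_mulr ?dvdpp.
rewrite derivB derivXn derivX -mulr_natl -polyC_natr natrX natr_card.
rewrite expr0n (negPf (lt0n_neq0 N_gt0)) mul0r add0r dvdpNr.
by move/(dvdp_leq (oner_neq0 _)); rewrite size_poly1 leqNgt sp.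
Qed.

Lemma proper_divisor_le_half g d : (d %| (2 * g).+1)%N -> d != (2 * g).+1 -> (d <= g)%N.
Proof.
by case/dvdnP=> k eN; case: k eN => [|[|k]] eN; lia.
Qed.

(* Degree count in X^(q^N) - X for N = 2g+1: it is squarefree and each of its
   monic irreducible factors has degree N or a proper divisor of N, at most g. *)
Lemma nb_irr_lower_sum g :
  (q ^ (2 * g).+1 <= (2 * g).+1 * nb_irr F (2 * g).+1
                     + \sum_(d <- iota 1 g) d * nb_irr F d)%N.
Proof.
set N := (2 * g).+1; have q_gt1 := finNzRing_gt1 F.
have qN_gt1 : (1 < q ^ N)%N by rewrite -(expn0 q) ltn_exp2l.
have nz : ('X^(q ^ N) - 'X : {poly F}) != 0 by rewrite -size_poly_gt0 size_XnsubX.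
set s := irr_seq F N ++ flatten [seq irr_seq F d | d <- iota 1 g].
have fac_s p : p \is monic -> irreducible_poly p -> p %| 'X^(q ^ N) - 'X -> p \in s.
  move=> mp ip pX; have mip : monic_irr p by apply/monic_irrP.
  have dN := irr_dvd_XqNsubX (conj ip mp) pX.
  have spE : size p = (size p).-1.+1 by rewrite prednK // ltnW // (size_irr_gt1 (conj ip mp)).
  rewrite mem_cat; case: (eqVneq (size p).-1 N) => [dNE | dNN].
    by rewrite mem_irr_seq mip spE dNE eqxx.
  apply/orP; right; apply/flattenP; exists (irr_seq F (size p).-1).
    by rewrite map_f // mem_iota add1n ltnS deg_irr_gt0 ?proper_divisor_le_half.
  by rewrite mem_irr_seq mip -spE eqxx.
have := squarefree_deg_bound nz (XqNsubX_squarefree (ltn0Sn _)) fac_s.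
rewrite size_XnsubX // big_cat big_flatten big_map deg_sum_irr_seq /=.
by under eq_bigr => d _ do rewrite deg_sum_irr_seq.
Qed.

Lemma sum_geometric_le m g : (1 < m)%N -> (\sum_(d <- iota 1 g) m ^ d <= 2 * m ^ g)%N.
Proof.
move=> m_gt1; elim: g => [|g IH]; first by rewrite big_nil.
rewrite -[g.+1]addn1 iotaD big_cat big_seq1 add1n addn1 expnS.
by apply: leq_trans (leq_add IH (leqnn _)) _; nia.
Qed.

Lemma nb_irr_lower g :
  (q ^ (2 * g).+1 <= (2 * g).+1 * nb_irr F (2 * g).+1 + 2 * q ^ g)%N.
Proof.
apply: leq_trans (nb_irr_lower_sum g) _; rewrite leq_add2l.
apply: leq_trans (sum_geometric_le g (finNzRing_gt1 F)).
by rewrite big_seq [X in (_ <= X)%N]big_seq; apply: leq_sum => d _; apply: nb_irr_upper.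
Qed.

End LowerBound.

Section Multiplicity.
Variable F : finFieldType.
Implicit Types Q f h : {poly F}.

(* Q^e | f forces e < size f, so the maximum defining pmult is attained. *)
Lemma exp_dvd_size_lt Q f e : (1 < size Q)%N -> f != 0 -> Q ^+ e %| f -> (e < size f)%N.
Proof.
move=> sQ f0 /(dvdp_leq f0); apply: leq_trans.
have sQe : (0 < size (Q ^+ e))%N by rewrite size_poly_gt0 expf_neq0 // -size_poly_gt0 ltnW.
by rewrite -(prednK sQe) ltnS size_exp leq_pmull // -ltnS prednK // ltnW.
Qed.

Lemma pmult_spec Q f : (1 < size Q)%N -> f != 0 ->
  Q ^+ pmult Q f %| f /\ ~~ (Q ^+ (pmult Q f).+1 %| f).
Proof.
move=> sQ f0; rewrite /pmult.
have sf : (0 < size f)%N by rewrite size_poly_gt0.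
have nonempty : (0 < #|[pred e : 'I_(size f) | (Q ^+ e %| f)%R]|)%N.
  by apply/card_gt0P; exists (Ordinal sf); rewrite inE /= expr0 dvd1p.
have [e0 Qe0f e0E] := eq_bigmax_cond (fun e : 'I_(size f) => nat_of_ord e) nonempty.
rewrite e0E; split; first by move: Qe0f; rewrite inE.
apply/negP => Qe1f; have e1_lt := exp_dvd_size_lt sQ f0 Qe1f.
have := @leq_bigmax_cond _ [pred e : 'I_(size f) | (Q ^+ e %| f)%R]
  (fun e : 'I_(size f) => nat_of_ord e) (Ordinal e1_lt).
by rewrite inE /= e0E ltnn => /(_ Qe1f).
Qed.

Lemma pmult_unique Q f m : (1 < size Q)%N -> f != 0 ->
  Q ^+ m %| f -> ~~ (Q ^+ m.+1 %| f) -> pmult Q f = m.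
Proof.
move=> sQ f0 Qmf Qm1f; have [Qvf Qv1f] := pmult_spec sQ f0.
apply/eqP; rewrite eqn_leq; apply/andP; split; rewrite leqNgt; apply/negP => lt.
  by move/negP: Qm1f; apply; apply: dvdp_trans Qvf; apply: dvdp_exp2l.
by move/negP: Qv1f; apply; apply: dvdp_trans Qmf; apply: dvdp_exp2l.
Qed.

Lemma pmult_sqr Q h : irreducible_poly Q -> h != 0 -> pmult Q (h ^+ 2) = (2 * pmult Q h)%N.
Proof.
move=> iQ h0; have sQ : (1 < size Q)%N by case: iQ.
have [Qvh Qv1h] := pmult_spec sQ h0; set v := pmult Q h in Qvh Qv1h *.
apply: pmult_unique => //; first by rewrite expf_neq0.
  by rewrite mulnC exprM dvdp_exp2r.
case/dvdpP: Qvh => h' eh.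
have nQh' : ~~ (Q %| h') by apply: contra Qv1h => Qh'; rewrite eh exprS dvdp_mul ?dvdpp.
have Qv0 : Q ^+ (v * 2) != 0 by rewrite expf_neq0 // -size_poly_gt0 ltnW.
rewrite eh exprMn -exprM mulnC exprS (dvdp_mul2r _ _ Qv0) expr2 Gauss_dvdpl //.
by rewrite irreducible_poly_coprime.
Qed.

End Multiplicity.

(* chi_P is trivial on monic squares of degree below deg P: no prime factor
   of such a square divides P, so every Legendre symbol is +-1 and it occurs
   with even exponent. *)
Lemma chiP_square (F : finFieldType) (P f : {poly F}) :
  monic_irr P -> is_msquare f -> (size f < size P)%N -> chiP P f = 1.
Proof.
move=> /monic_irrP [_ [_ irrP]] /pdecP [h [mh ->]] sfP.
rewrite /chiP /jacobi; apply: big1 => d _; apply: big1 => t /monic_irrP [_ iQ].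
have sQ : (1 < size (mkmonic t))%N by case: iQ.
have nQP : ~~ (mkmonic t %| P).
  apply/negP => QP; have sQ1 : size (mkmonic t) != 1%N by rewrite neq_ltn sQ orbT.
  have := eqp_size (irrP _ sQ1 QP); rewrite size_mkmonic => sPE.
  by have := leq_ltn_trans (ltn_ord d) sfP; rewrite -sPE ltnn.
rewrite /legendre (negPf nQP) pmult_sqr ?monic_neq0 // exprM.
by case: pdec; rewrite ?sqrrN !expr1n.
Qed.

(* Monic squares of degree 2m are in bijection with monic polynomials of
   degree m through h |-> h^2. *)
Section MonicSquares.
Variable F : finFieldType.

Lemma monic_sqr_inj (a b : {poly F}) : a \is monic -> b \is monic -> a ^+ 2 = b ^+ 2 -> a = b.
Proof.
move=> ma mb abE; have /eqP : (a - b) * (a + b) = 0 by rewrite -subr_sqr abE subrr.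
rewrite mulf_eq0 subr_eq0 addr_eq0 => /orP [/eqP // | /eqP aE].
have one_eq : (1 : F) = -1 by move: (congr1 lead_coef aE); rewrite lead_coefN !(monicP _).
by rewrite aE -scaleN1r -one_eq scale1r.
Qed.

Lemma size_sqr_monic (h : {poly F}) : h \is monic -> size (h ^+ 2) = ((size h).-1 * 2).+1.
Proof.
by move=> mh; rewrite -size_exp prednK // size_poly_gt0 monic_neq0 // monic_exp.
Qed.

Definition sqr_coords m (w : {ffun 'I_m -> F}) : {ffun 'I_(m * 2) -> F} :=
  [ffun i : 'I_(m * 2) => ((mkmonic w) ^+ 2)`_i].

Lemma mkmonic_sqr_coords m (w : {ffun 'I_m -> F}) :
  mkmonic (sqr_coords w) = (mkmonic w) ^+ 2.
Proof.
apply: mkmonicK; first by rewrite monic_exp // monic_mkmonic.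
by rewrite size_sqr_monic ?monic_mkmonic // size_mkmonic.
Qed.

Lemma sqr_coords_inj m : injective (@sqr_coords m).
Proof.
move=> w1 w2 e; apply/mkmonic_inj/monic_sqr_inj; rewrite ?monic_mkmonic //.
by rewrite -!mkmonic_sqr_coords e.
Qed.

Lemma card_msquare n :
  #|[pred u : {ffun 'I_n -> F} | is_msquare (mkmonic u)]| =
  if odd n then 0%N else (#|F| ^ n./2)%N.
Proof.
have sizeE (u : {ffun 'I_n -> F}) h : h \is monic -> mkmonic u = h ^+ 2 ->
    n = ((size h).-1 * 2)%N.
  by move=> mh uE; have := size_mkmonic u; rewrite uE size_sqr_monic // => -[].
case: ifP => [odd_n | even_n].
  apply: eq_card0 => u; rewrite inE; apply/negP => /pdecP [h [mh /(sizeE _ _ mh) nE]].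
  by rewrite nE oddM andbF in odd_n.
have [m nE] : exists m, n = (m * 2)%N.
  by exists n./2; rewrite muln2 -[LHS]odd_double_half even_n.
subst n; have -> : ((m * 2)./2 = m)%N by rewrite muln2 doubleK.
rewrite -[in RHS](card_ord m) -card_ffun -cardsT -(card_imset _ (@sqr_coords_inj m)).
apply: eq_card => u; rewrite inE /=; apply/pdecP/imsetP => [[h [mh uE]] | [w _ ->]].
  have sh : size h = m.+1.
    have := sizeE u h mh uE; move/eqP; rewrite eqn_mul2r /= => /eqP ->.
    by rewrite prednK // size_poly_gt0 monic_neq0.
  exists [ffun i : 'I_m => h`_i] => //; apply: mkmonic_inj.
  by rewrite mkmonic_sqr_coords mkmonicK.
by exists (mkmonic w); rewrite ?monic_mkmonic ?mkmonic_sqr_coords.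
Qed.

End MonicSquares.

(* Each even n <= g contributes q^(n/2) * q^(-n/2) = 1: the sum counts the even
   numbers in [0, g]. *)
Lemma sum_square_weights (R : rcfType) (q : R) g : 0 < q ->
  \sum_(n < g.+1) (if odd n then 0 else q ^+ n./2) * Num.sqrt q ^- n = (g./2).+1%:R.
Proof.
move=> q_gt0; have sqrt_sq : Num.sqrt q ^+ 2 = q by rewrite sqr_sqrtr // ltW.
elim: g => [|g IH]; first by rewrite big_ord_recr big_ord0 /= expr0 invr1 mulr1 add0r.
rewrite big_ord_recr /= IH uphalf_half; case: (boolP (odd g)) => [odd_g | even_g] /=.
  have gE : g.+1 = (2 * (g./2).+1)%N by rewrite -[in LHS](odd_double_half g) odd_g mul2n.
  rewrite gE exprM sqrt_sq divff ?expf_neq0 ?gt_eqF //.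
  by rewrite add1n [in RHS]mulrSr.
by rewrite add0n mul0r addr0.
Qed.

Lemma character_sum_squares (F : finFieldType) (R : rcfType) (P : {poly F}) g :
  monic_irr P -> (g.+1 < size P)%N ->
  \sum_(n < g.+1) \sum_(u : {ffun 'I_n -> F} | is_msquare (mkmonic u))
     (chiP P (mkmonic u))%:~R * Num.sqrt (#|F|%:R : R) ^- n = (g./2).+1%:R.
Proof.
move=> irrP sP; have q_gt0 : 0 < (#|F|%:R : R) by rewrite ltr0n ltnW ?finNzRing_gt1.
rewrite -(sum_square_weights g q_gt0).
apply: eq_bigr => n _; rewrite (eq_bigr (fun _ => Num.sqrt (#|F|%:R : R) ^- n)); last first.
  move=> u sq_u; rewrite chiP_square ?mul1r // size_mkmonic.
  exact: leq_ltn_trans (ltn_ord n) sP.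
rewrite sumr_const card_msquare.
by case: odd; rewrite ?mulr0n ?mul0r // -[LHS]mulr_natl natrX.
Qed.

Lemma prime_poly_error (F : finFieldType) (R : rcfType) g :
  `|((2 * g + 1) * nb_irr F (2 * g + 1))%:R - (#|F|%:R : R) ^+ (2 * g + 1)|
    <= 2 * Num.sqrt ((#|F|%:R : R) ^+ (2 * g + 1)).
Proof.
set q : R := #|F|%:R; set N := (2 * g + 1)%N; have q_gt1 : 1 < q by rewrite ltr1n finNzRing_gt1.
have qg_ge0 : 0 <= q ^+ g by rewrite exprn_ge0 // ltW // (lt_trans ltr01).
have up : (N * nb_irr F N)%:R <= q ^+ N by rewrite -natrX ler_nat nb_irr_upper.
have lo : q ^+ N <= (N * nb_irr F N)%:R + 2 * q ^+ g.
  by have := nb_irr_lower F g; rewrite -(ler_nat R) -addn1 natrD !natrM !natrX.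
have qg_le : q ^+ g <= Num.sqrt (q ^+ N).
  rewrite -(ger0_norm qg_ge0) -sqrtr_sqr ler_sqrt ?exprn_ge0 ?ltW ?(lt_trans ltr01) //.
  by rewrite -exprM (ltr_eXn2l q_gt1) /N; lia.
rewrite distrC ler_norml; apply/andP; split; lra.
Qed.

Lemma sum_chiP_squares (F : finFieldType) (R : rcfType) g :
  \sum_(t : {ffun 'I_(2 * g + 1) -> F} | monic_irr (mkmonic t))
    \sum_(n < g.+1) \sum_(u : {ffun 'I_n -> F} | is_msquare (mkmonic u))
      (chiP (mkmonic t) (mkmonic u))%:~R * Num.sqrt (#|F|%:R : R) ^- n
  = (nb_irr F (2 * g + 1))%:R * (g./2).+1%:R.
Proof.
rewrite [RHS]mulr_natl /nb_irr -[RHS]sumr_const; apply: eq_bigr => t irr_t.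
by rewrite character_sum_squares // size_mkmonic; lia.
Qed.

Unset Implicit Arguments.

Theorem proposition3p1 (F : finFieldType) (R : rcfType) :
  odd #|F| -> (#|F| %% 4 = 1)%N ->
  exists C : R, exists g0 : nat, forall g : nat, (g0 <= g)%N ->
    let q : R := (#|F|)%:R in
    let absP : R := q ^+ (2 * g + 1) in
    let logP : R := (2 * g + 1)%:R in
    `| (\sum_(t : {ffun 'I_(2 * g + 1) -> F} | monic_irr (mkmonic t))
          \sum_(n < g.+1)
            \sum_(u : {ffun 'I_n -> F} | is_msquare (mkmonic u))
              (chiP (mkmonic t) (mkmonic u))%:~R * (Num.sqrt q) ^- n)
       - absP / logP * ((g./2).+1)%:R |
    <= C * (Num.sqrt absP / logP * g%:R).
Proof.
move=> _ _; exists 2, 1%N => g g_ge1 /=.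
have err := prime_poly_error F R g.
set q : R := #|F|%:R in err *; set absP := q ^+ (2 * g + 1) in err *.
set logP : R := (2 * g + 1)%:R.
rewrite sum_chiP_squares; set k := (g./2).+1.
have g_ge0 : (0 : R) <= g%:R := ler0n _ _.
have logP_gt0 : 0 < logP by rewrite ltr0n addn1.
have k_le_g : (k%:R : R) <= g%:R by rewrite ler_nat /k; have := odd_double_half g; lia.
(* The deviation is k/logP |N pi(N) - q^N| <= g/logP * 2 sqrt(q^N). *)
have -> : (nb_irr F (2 * g + 1))%:R * k%:R - absP / logP * k%:R
    = k%:R / logP * (((2 * g + 1) * nb_irr F (2 * g + 1))%:R - absP).
  by rewrite natrM; field; apply: lt0r_neq0; lra.
rewrite normrM ger0_norm ?divr_ge0 ?ler0n ?(ltW logP_gt0) //.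
have -> : 2 * (Num.sqrt absP / logP * g%:R) = g%:R / logP * (2 * Num.sqrt absP).
  by field; apply: lt0r_neq0; lra.
apply: ler_pM; [by rewrite divr_ge0 ?(ltW logP_gt0) | exact: normr_ge0 | | exact: err].
by rewrite ler_pM2r ?invr_gt0.
Qed.
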